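(* Let $v_1,\ldots,v_n$ ($n\ge2$) be an MA-ordering of a capacitated hypergraph $H$, and let $\beta=\min_{1<i\le n}d(V_{i-1},v_i)$. Then $\beta\le\lambda(H)\le n\beta$.
   Context: A hypergraph $H=(V,E)$ has finite vertex set $V$, a finite multiset $E$ of edges (subsets of $V$) and capacities $c:E\to\mathbb{R}_{\ge0}$. $c(S)$ is the total capacity of edges meeting both $S$ and $V\setminus S$, and $\lambda(H)=\min_{\emptyset\ne S\subsetneq V}c(S)$. For subsets $A_1,\ldots,A_k$, $d(A_1,\ldots,A_k)$ is the total capacity of edges meeting every $A_i$ (a vertex $v$ stands for $\{v\}$). $V_i=\{v_1,\ldots,v_i\}$; the ordering is an MA-ordering if $d(V_{i-1},v_i)\ge d(V_{i-1},v_j)$ for all $1\le i<j\le n$. *)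

From HB Require Import structures.
From mathcomp Require Import all_boot all_order all_algebra.
Set Implicit Arguments. Unset Strict Implicit. Unset Printing Implicit Defensive.
Import Order.TTheory GRing.Theory Num.Theory.
Local Open Scope ring_scope.

(* A capacitated hypergraph: vertex set the finType V, edges indexed by the
   finType E (so that the edge multiset may contain repetitions), the edge
   map ed : E -> {set V}, capacities c : E -> R (assumed nonnegative in the
   theorem). *)

Definition meets (V : finType) (X A : {set V}) : bool := X :&: A != set0.

Definition total_cap (R : realFieldType) (E : finType) (c : E -> R) : R :=
  \sum_(f : E) c f.

Definition cutval (R : realFieldType) (V E : finType) (ed : E -> {set V})
  (c : E -> R) (S : {set V}) : R :=
  \sum_(f : E | meets (ed f) S && meets (ed f) (~: S)) c f.

Definition dcap (R : realFieldType) (V E : finType) (ed : E -> {set V})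
  (c : E -> R) (A B : {set V}) : R :=
  \sum_(f : E | meets (ed f) A && meets (ed f) B) c f.

(* The fold starts at the
   total capacity, an upper bound of every cut value (capacities being
   nonnegative), so this is exactly the minimum whenever |V| >= 2. *)
Definition lambdaH (R : realFieldType) (V E : finType) (ed : E -> {set V})
  (c : E -> R) : R :=
  \big[Num.min/total_cap c]_(S : {set V} | (S != set0) && (S != setT))
     cutval ed c S.

(* V_i = {v_1, ..., v_i}; with a 0-indexed ordering v : 'I_n -> V,
   prefix v i = {v 0, ..., v (i-1)} (i elements). *)
Definition prefix (V : finType) (n : nat) (v : 'I_n -> V) (i : nat) : {set V} :=
  [set v j | j : 'I_n & (j < i)%N].

Definition MA_ordering (R : realFieldType) (V E : finType) (ed : E -> {set V})
  (c : E -> R) (n : nat) (v : 'I_n -> V) : Prop :=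
  forall i j : 'I_n, (i < j)%N ->
    dcap ed c (prefix v i) [set v j] <= dcap ed c (prefix v i) [set v i].

(* beta = min_{1 < i <= n} d(V_{i-1}, v_i); 0-indexed: i ranges over
   1 <= i < n.  The fold starts at the total capacity (an upper bound). *)
Definition betaMA (R : realFieldType) (V E : finType) (ed : E -> {set V})
  (c : E -> R) (n : nat) (v : 'I_n -> V) : R :=
  \big[Num.min/total_cap c]_(i : 'I_n | (0 < i)%N)
     dcap ed c (prefix v i) [set v i].

From Pilot Require Import Defs.
From HB Require Import structures.
From mathcomp Require Import all_boot all_order all_algebra.
Import Order.TTheory GRing.Theory Num.Theory.
Set Implicit Arguments. Unset Strict Implicit. Unset Printing Implicit Defensive.
Local Open Scope ring_scope.

(* Lower bound: every nonempty proper S is crossed for the first time by the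
   ordering at some v_i with i > 0, so V_{i-1} and v_i lie on opposite sides
   of S and every edge counted in d(V_{i-1}, v_i) is cut by S.
   Upper bound: the edges cut by V_{i-1} meet some later vertex v_j, so
   c(V_{i-1}) <= sum_{j >= i} d(V_{i-1}, v_j) <= n d(V_{i-1}, v_i) by the
   MA property. *)

Lemma ler_sum_subpred (R : numDomainType) (I : finType) (P Q : pred I)
    (F : I -> R) :
  (forall i, Q i -> 0 <= F i) -> subpred P Q ->
  \sum_(i | P i) F i <= \sum_(i | Q i) F i.
Proof.
move=> F_ge0 PQ; rewrite [leLHS]big_mkcond [leRHS]big_mkcond /=.
apply: ler_sum => i _; case: ifP => [/PQ -> //|_].
by case: ifP => // /F_ge0.
Qed.

Lemma meetsS {V : finType} {X A B : {set V}} :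
  A \subset B -> meets X A -> meets X B.
Proof.
rewrite /meets => AB; apply: contraNneq => XB0.
by rewrite -subset0 -XB0 setIS.
Qed.

Section Cuts.
Variables (R : realFieldType) (V E : finType) (ed : E -> {set V}) (c : E -> R).
Hypothesis c_ge0 : forall f, 0 <= c f.

Lemma dcap_ge0 (A B : {set V}) : 0 <= dcap ed c A B.
Proof. exact: sumr_ge0. Qed.

Lemma total_cap_ge0 : 0 <= total_cap c.
Proof. exact: sumr_ge0. Qed.

Lemma cutvalC (S : {set V}) : cutval ed c (~: S) = cutval ed c S.
Proof. by apply: eq_bigl => f; rewrite setCK andbC. Qed.

Lemma dcap_le_cutval (A B S : {set V}) :
  A \subset S -> B \subset ~: S -> dcap ed c A B <= cutval ed c S.
Proof.
move=> AS BSc; apply: ler_sum_subpred => // f /andP[fA fB].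
by rewrite (meetsS AS fA) (meetsS BSc fB).
Qed.

Lemma cutval_le_sum_dcap (S : {set V}) :
  cutval ed c S <= \sum_(x | x \notin S) dcap ed c S [set x].
Proof.
rewrite /dcap (exchange_big_dep xpredT) //= [leLHS]big_mkcond /=.
apply: ler_sum => f _; case: ifP => [/andP[fS fSc]|_]; last exact: sumr_ge0.
have [z] := set0Pn _ fSc; rewrite !inE => /andP[zf zS].
rewrite (bigD1 z) /=; last first.
  by rewrite zS fS /meets; apply/set0Pn; exists z; rewrite !inE zf eqxx.
by rewrite lerDl sumr_ge0.
Qed.

End Cuts.

Section Ordering.
Variables (V : finType) (n : nat) (v : 'I_n -> V).
Hypothesis v_bij : bijective v.
Hypothesis n_gt0 : (0 < n)%N.

Lemma mem_prefix i j : (v j \in Defs.prefix v i) = (j < i)%N.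
Proof.
apply/imsetP/idP => [[k]|ji]; last by exists j; rewrite ?inE.
by rewrite inE => ki /(bij_inj v_bij) ->.
Qed.

Lemma prefix_first_exit (T : {set V}) :
  v (Ordinal n_gt0) \in T -> T != setT ->
  exists2 i : 'I_n, (0 < i)%N & Defs.prefix v i \subset T /\ v i \notin T.
Proof.
move=> v0T; rewrite -subTset => /subsetPn[x _ xT].
have [w _ wK] := v_bij; rewrite -[x]wK in xT.
have [i viT i_min] := @arg_minnP _ _ (fun j => v j \notin T) val xT.
exists i; last split=> //.
- rewrite lt0n; apply: contraNneq viT => i0.
  by rewrite (_ : i = Ordinal n_gt0) //; apply: val_inj.
- apply/subsetP => y /imsetP[k]; rewrite inE => ki ->.
  by apply: contraTT ki => /i_min; rewrite -leqNgt.
Qed.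

Lemma prefix_proper (i : 'I_n) :
  (0 < i)%N -> (Defs.prefix v i != set0) && (Defs.prefix v i != setT).
Proof.
move=> i0; apply/andP; split.
- by apply/set0Pn; exists (v (Ordinal n_gt0)); rewrite mem_prefix.
- by apply/negP => /eqP iT; have := mem_prefix i i; rewrite iT inE ltnn.
Qed.

End Ordering.

Section MAOrdering.
Variables (R : realFieldType) (V E : finType) (ed : E -> {set V}) (c : E -> R).
Hypothesis c_ge0 : forall f, 0 <= c f.
Variables (n : nat) (v : 'I_n -> V).
Hypotheses (v_bij : bijective v) (n_gt0 : (0 < n)%N).

Lemma betaMA_le_cutval (S : {set V}) :
  S != set0 -> S != setT -> betaMA ed c v <= cutval ed c S.
Proof.
move=> S0 ST; pose T := if v (Ordinal n_gt0) \in S then S else ~: S.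
have cutT : cutval ed c T = cutval ed c S.
  by rewrite /T; case: ifP => // _; apply: cutvalC.
have v0T : v (Ordinal n_gt0) \in T by rewrite /T; case: ifP => // /negbT; rewrite inE.
have TT : T != setT.
  rewrite /T; case: ifP => // _; apply: contra S0 => /eqP.
  by rewrite -setC0 => /setC_inj ->.
have [i i0 [iT viT]] := prefix_first_exit v_bij v0T TT.
rewrite -cutT; apply: (bigmin_inf i) => //; apply: dcap_le_cutval => //.
by rewrite sub1set inE.
Qed.

Lemma betaMA_le_lambdaH : betaMA ed c v <= lambdaH ed c.
Proof.
apply: le_bigmin; first exact: bigmin_le_id.
by move=> S /andP[S0 ST]; apply: betaMA_le_cutval.
Qed.

Hypothesis hMA : MA_ordering ed c v.

Lemma cutval_prefix_le_dcap (i : 'I_n) :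
  cutval ed c (Defs.prefix v i) <= n%:R * dcap ed c (Defs.prefix v i) [set v i].
Proof.
apply: (le_trans (cutval_le_sum_dcap _ c_ge0 _)).
rewrite (reindex v) /=; last exact: onW_bij.
under eq_bigl do rewrite mem_prefix // -leqNgt.
apply: (@le_trans _ _ (\sum_(j : 'I_n | (i <= j)%N) dcap ed c (Defs.prefix v i) [set v i])).
  apply: ler_sum => j; rewrite leq_eqVlt => /predU1P[/val_inj <- // | ij].
  exact: hMA.
rewrite mulr_natl -[X in _ *+ X](card_ord n) -sumr_const.
by apply: ler_sum_subpred => // j _; apply: dcap_ge0.
Qed.

Lemma lambdaH_le_mul_betaMA : lambdaH ed c <= n%:R * betaMA ed c v.
Proof.
rewrite /betaMA; elim/big_ind: _.
- apply: (le_trans (bigmin_le_id _ _ _ _)).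
  by rewrite ler_peMl ?total_cap_ge0 // ler1n.
- by move=> a b; rewrite minEle; case: ifP.
- move=> i i0; apply: le_trans (cutval_prefix_le_dcap i).
  exact: (bigmin_le_cond _ (cutval ed c) (prefix_proper v_bij n_gt0 i0)).
Qed.

End MAOrdering.

Theorem mainTheorem20 (R : realFieldType) (V E : finType)
  (ed : E -> {set V}) (c : E -> R) (c_ge0 : forall f, 0 <= c f)
  (n : nat) (v : 'I_n -> V) (v_bij : bijective v) (n_ge2 : (2 <= n)%N)
  (hMA : MA_ordering ed c v) :
  betaMA ed c v <= lambdaH ed c /\ lambdaH ed c <= n%:R * betaMA ed c v.
Proof.
have n_gt0 : (0 < n)%N by apply: leq_trans n_ge2.
split; first exact: (betaMA_le_lambdaH ed c_ge0 v_bij n_gt0).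
exact: (lambdaH_le_mul_betaMA c_ge0 v_bij n_gt0 hMA).
Qed.
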